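(* For any prime $p>3$, $$\sum_{k=1}^{p-1} {(1/2)_k^2\over (1)_k^2}\cdot{1\over k}\equiv -2H_{(p-1)/2}(1)\pmod{p^3},$$ $$\sum_{k=1}^{p-1} {(1/2)_k^2\over (1)_k^2}\cdot{1\over k^2}\equiv -2H_{(p-1)/2}(1)^2\pmod{p^2}.$$
   Context: $(y)_n=y(y+1)\cdots(y+n-1)$ denotes the Pochhammer symbol, and $H_n(1)=\sum_{k=1}^n \frac1k$. Congruences between rational numbers modulo $p^j$ mean that the difference is a rational number whose numerator is divisible by $p^j$ and whose denominator is prime to $p$. *)

From mathcomp Require Import all_boot all_order all_algebra.
Set Implicit Arguments. Unset Strict Implicit. Unset Printing Implicit Defensive.
Import Order.TTheory GRing.Theory Num.Theory.
Local Open Scope ring_scope.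

Definition poch (y : rat) (n : nat) : rat := \prod_(i < n) (y + i%:R).

Definition harm (n : nat) : rat := \sum_(1 <= k < n.+1) (k%:R)^-1.

Definition rat_congr (p j : nat) (a b : rat) : Prop :=
  ((p ^ j)%:Z %| numq (a - b))%Z /\ coprime `|denq (a - b)|%N p.

From HB Require Import structures.
From mathcomp Require Import all_boot all_order all_algebra.
From mathcomp Require Import ring zify.
Set Implicit Arguments. Unset Strict Implicit. Unset Printing Implicit Defensive.
Import Order.TTheory GRing.Theory Num.Theory.
Local Open Scope ring_scope.

(* The summand is the value at x = -1/2 of hterm x k = (-x)_k (x+1)_k / k!^2, which
   equals P_k((x + 1/2)^2) / k!^2 with P_k in Z_(p)[X].  At a natural number x = m
   the two sums equal -2 H_m and -2 H_m^2: they satisfy a first-order difference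
   equation in x whose right-hand side is a closed-form partial sum.
   For p = 2n + 1 the points x = -1/2, n, n + p give (x + 1/2)^2 = 0, s, 9 s with
   s = p^2/4, so the second sums agree mod p^2 at -1/2 and n, while for the first
   sums S(n + p) - 9 S(n) + 8 S(-1/2) = 0 mod p^4.  It remains to show
   S(n + p) = S(n) mod p^3: telescoping the difference equation from n to n + p, the
   steps below p contribute -2/(p - m), and together with the steps at p and p + m
   (explicit products of factors 1 + O(p)) they cancel modulo p^3. *)

(* [pint p] is the local ring Z_(p) and [pdvd p j] its ideal p^j Z_(p). *)
Definition pint (p : nat) : {pred rat} := fun x => coprime `|denq x| p.

Lemma pint_frac (p : nat) (a b : int) : coprime `|b| p -> a%:~R / b%:~R \in pint p.
Proof.
move=> cbp; have [-> | b0] := eqVneq b 0.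
  by rewrite invr0 mulr0 unfold_in /pint /= coprime1n.
set x := a%:~R / b%:~R.
have e : numq x * b = a * denq x.
  by apply: (@intr_inj rat); rewrite !intrM numqE /x; field; rewrite intr_eq0.
have : (`|denq x| %| `|numq x| * `|b|)%N by rewrite -abszM e abszM dvdn_mull.
rewrite Gauss_dvdr 1?coprime_sym ?coprime_num_den // => dvd_den_b.
by rewrite unfold_in /pint /=; apply: coprime_dvdl cbp.
Qed.

Fact pint_subring_closed p : subring_closed (pint p).
Proof.
have frac x : x = (numq x)%:~R / (denq x)%:~R by rewrite divq_num_den.
have cop x : x \in pint p -> coprime `|denq x| p by rewrite unfold_in.
split=> [|x y /cop px /cop py|x y /cop px /cop py].
- by rewrite unfold_in /pint /= coprime1n.
- rewrite (frac x) (frac y) -[_ - _]/(_ + _) -mulNr -intrN addf_div ?intr_eq0 ?denq_neq0 //.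
  by rewrite -!intrM -intrD pint_frac // abszM coprimeMl px py.
- by rewrite (frac x) (frac y) mulf_div -!intrM pint_frac // abszM coprimeMl px py.
Qed.

HB.instance Definition _ p := GRing.isSubringClosed.Build rat (pint p) (pint_subring_closed p).

Lemma pint_natV (p n : nat) : coprime n p -> n%:R^-1 \in pint p.
Proof. by move=> cnp; have := @pint_frac p 1 n cnp; rewrite div1r pmulrn. Qed.

Definition pdvd (p j : nat) : {pred rat} := fun x => x / p%:R ^+ j \in pint p.

Lemma pdvdE p j x : (x \in pdvd p j) = (x / p%:R ^+ j \in pint p).
Proof. by []. Qed.

Fact pdvd_zmod_closed p j : zmod_closed (pdvd p j).
Proof. by split=> [|x y]; rewrite !pdvdE ?mul0r ?rpred0 // mulrBl; apply: rpredB. Qed.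

HB.instance Definition _ p j := GRing.isZmodClosed.Build rat (pdvd p j) (pdvd_zmod_closed p j).

Section PDivisibility.
Variable p : nat.
Implicit Types (x y a : rat).

Lemma pdvdMl j a x : a \in pint p -> x \in pdvd p j -> a * x \in pdvd p j.
Proof. by rewrite !pdvdE -mulrA; apply: rpredM. Qed.

Lemma pdvdMr j a x : a \in pint p -> x \in pdvd p j -> x * a \in pdvd p j.
Proof. by rewrite mulrC; apply: pdvdMl. Qed.

Lemma pdvdM i j x y : x \in pdvd p i -> y \in pdvd p j -> x * y \in pdvd p (i + j).
Proof. by rewrite !pdvdE exprD invfM mulrACA; apply: rpredM. Qed.

Lemma pdvd_divp j x : x \in pdvd p j.+1 -> x / p%:R \in pdvd p j.
Proof. by rewrite !pdvdE exprS invfM mulrA. Qed.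

Lemma pdvd0 x : (x \in pdvd p 0) = (x \in pint p).
Proof. by rewrite pdvdE expr0 divr1. Qed.

Hypothesis p_gt0 : (0 < p)%N.

Let p_neq0 : p%:R != 0 :> rat. Proof. by rewrite pnatr_eq0 -lt0n. Qed.

Lemma pdvd_pexp j : p%:R ^+ j \in pdvd p j.
Proof. by rewrite pdvdE divff ?rpred1 // expf_neq0. Qed.

Lemma pdvd_p : p%:R \in pdvd p 1.
Proof. by rewrite -[p%:R]expr1 pdvd_pexp. Qed.

Lemma pdvdW i j x : (i <= j)%N -> x \in pdvd p j -> x \in pdvd p i.
Proof.
move=> le_ij; rewrite -(subnKC le_ij) !pdvdE => pjx.
suff -> : x / p%:R ^+ i = p%:R ^+ (j - i) * (x / p%:R ^+ (i + (j - i))).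
  by rewrite rpredM ?rpredX ?rpred_nat.
by rewrite exprD; field; rewrite !expf_neq0.
Qed.

Lemma pint_pdvd j x : x \in pdvd p j -> x \in pint p.
Proof. by rewrite -pdvd0; apply: pdvdW. Qed.

Lemma prod1D_sub1_pdvd (I : eqType) (r : seq I) j (w : I -> rat) :
  {in r, forall i, w i \in pdvd p j} -> \prod_(i <- r) (1 + w i) - 1 \in pdvd p j.
Proof.
elim: r => [|a r IHr] pw; first by rewrite big_nil subrr rpred0.
have {}IHr : \prod_(i <- r) (1 + w i) - 1 \in pdvd p j.
  by apply: IHr => i ri; apply: pw; rewrite inE ri orbT.
have pP : \prod_(i <- r) (1 + w i) \in pint p.
  by rewrite -[X in X \in _](subrK 1) rpredD ?rpred1 ?(pint_pdvd IHr).
by rewrite big_cons mulrDl mul1r addrAC rpredD // pdvdMr // pw // mem_head.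
Qed.

Lemma prod1D_sub_sum_pdvd (I : eqType) (r : seq I) j (w : I -> rat) :
  {in r, forall i, w i \in pdvd p j} ->
  \prod_(i <- r) (1 + w i) - 1 - \sum_(i <- r) w i \in pdvd p (j + j).
Proof.
elim: r => [|a r IHr] pw; first by rewrite !big_nil !subrr rpred0.
have pw' : {in r, forall i, w i \in pdvd p j} by move=> i ri; apply: pw; rewrite inE ri orbT.
rewrite !big_cons; set P := \prod_(i <- r) _; set Y := \sum_(i <- r) _.
have -> : (1 + w a) * P - 1 - (w a + Y) = (P - 1 - Y) + w a * (P - 1) by ring.
by rewrite rpredD ?IHr // pdvdM ?prod1D_sub1_pdvd ?pw ?mem_head.
Qed.

End PDivisibility.

Lemma rat_congr_pdvd p j a b : prime p -> a - b \in pdvd p j -> rat_congr p j a b.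
Proof.
move=> pr_p pjab; have p_gt0 := prime_gt0 pr_p.
have := pint_pdvd p_gt0 pjab; rewrite pdvdE in pjab.
set z := a - b in pjab *; set y := z / _ in pjab => pz; split => //.
have e : (numq z * denq y = (p ^ j)%:Z * numq y * denq z)%R.
  apply: (@intr_inj rat); rewrite !intrM !numqE -pmulrn natrX /y.
  by field; rewrite expf_neq0 // pnatr_eq0 -lt0n.
have : (`|(p ^ j)%:Z| %| `|numq z| * `|denq y|)%N.
  by rewrite -abszM e -mulrA abszM dvdn_mulr.
by rewrite dvdzE Gauss_dvdl // coprime_sym coprimeXr.
Qed.

Lemma fact_neq0 k : k`!%:R != 0 :> rat.
Proof. by rewrite pnatr_eq0 -lt0n fact_gt0. Qed.

Lemma natS_neq0 k : 1 + k%:R != 0 :> rat.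
Proof. by rewrite nat1r pnatr_eq0. Qed.

Lemma natrSB1 m : m.+1%:R - 1 = m%:R :> rat.
Proof. by rewrite -natr1 addrK. Qed.

Lemma poch0 y : poch y 0 = 1.
Proof. by rewrite /poch big_ord0. Qed.

Lemma pochS y k : poch y k.+1 = poch y k * (y + k%:R).
Proof. by rewrite /poch big_ord_recr. Qed.

Lemma pochSl y k : poch y k.+1 = y * poch (y + 1) k.
Proof.
rewrite /poch big_ord_recl /= addr0; congr (_ * _); apply: eq_bigr => i _.
by rewrite /bump /= add1n -addn1 natrD addrA addrC [_ + 1]addrC addrA.
Qed.

Lemma poch1 k : poch 1 k = k`!%:R.
Proof. by elim: k => [|k IHk]; rewrite ?poch0 // pochS IHk factS natrM -natr1 mulrC addrC. Qed.

Lemma poch_opp_nat (m k : nat) : (m < k)%N -> poch (- m%:R) k = 0.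
Proof. by move=> lt_mk; rewrite /poch (bigD1 (Ordinal lt_mk)) //= addNr mul0r. Qed.

Lemma poch_oppn N : poch (- N%:R) N = (-1) ^+ N * N`!%:R.
Proof.
elim: N => [|N IHN]; first by rewrite poch0 expr0 mul1r.
rewrite pochSl -natr1 opprD addrK IHN factS natrM exprS -natr1; ring.
Qed.

Lemma poch_succ_fact x N : poch (x + 1) N / N`!%:R = \prod_(0 <= i < N) (1 + x / i.+1%:R).
Proof.
elim: N => [|N IHN]; first by rewrite poch0 big_geq ?divr1.
rewrite big_nat_recr //= -IHN pochS factS natrM.
by field; rewrite fact_neq0 natS_neq0.
Qed.

Definition hterm (x : rat) k := poch (- x) k * poch (x + 1) k / (k`!%:R) ^+ 2.
Definition dterm (x : rat) k := poch (- x) k * poch x k / (k`!%:R) ^+ 2.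
Definition hclosed N (x : rat) := poch (1 - x) N * poch (x + 1) N / (N`!%:R) ^+ 2.
Definition hsum1 N x := \sum_(1 <= k < N.+1) hterm x k / k%:R.
Definition hsum2 N x := \sum_(1 <= k < N.+1) hterm x k / (k%:R) ^+ 2.

Lemma hterm_half k : hterm (- (1/2)) k = poch (1/2) k ^+ 2 / poch 1 k ^+ 2.
Proof. by rewrite /hterm opprK poch1 (_ : - (1/2) + 1 = 1/2 :> rat). Qed.

Lemma sum_dterm N x : \sum_(k < N.+1) dterm x k = hclosed N x.
Proof.
elim: N => [|N IHN]; first by rewrite big_ord1 /dterm /hclosed !poch0 !mul1r.
rewrite big_ord_recr /= IHN /dterm /hclosed (pochSl (- x)) (pochSl x) !pochS factS natrM.
rewrite -(@natr1 rat N) -[- x + 1]addrC; field.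
by rewrite fact_neq0 natr1 pnatr_eq0.
Qed.

Lemma sum1_dterm N x : \sum_(1 <= k < N.+1) dterm x k = hclosed N x - 1.
Proof.
rewrite -sum_dterm -(big_mkord xpredT) (big_ltn (ltn0Sn N)) /dterm !poch0 fact0.
by rewrite addrAC; field.
Qed.

Lemma hterm_diff x k : x * (hterm x k.+1 - hterm (x - 1) k.+1) = 2 * k.+1%:R * dterm x k.+1.
Proof.
rewrite /hterm /dterm !opprB !subrK (pochSl (- x)) (pochSl x) !pochS -!(@natr1 rat k).
by rewrite -[- x + 1]addrC; field; rewrite fact_neq0.
Qed.

Lemma dterm_hterm x k : dterm x k * (x + k%:R) = x * hterm x k.
Proof.
have e : poch x k * (x + k%:R) = x * poch (x + 1) k by rewrite -pochS pochSl.
rewrite /hterm /dterm.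
transitivity (poch (- x) k * (poch x k * (x + k%:R)) / (k`!%:R) ^+ 2); first by ring.
by rewrite e; ring.
Qed.

Lemma hsum1_diff N x : x * (hsum1 N x - hsum1 N (x - 1)) = 2 * (hclosed N x - 1).
Proof.
rewrite /hsum1 -sumrB mulr_sumr -sum1_dterm mulr_sumr.
apply: eq_big_nat => -[//|k] _; rewrite -mulrBl mulrA hterm_diff.
by field; rewrite natS_neq0.
Qed.

Lemma hsum1_succ N x :
  hsum1 N x.+1%:R - hsum1 N x%:R = 2 * (hclosed N x.+1%:R - 1) / x.+1%:R.
Proof.
have := hsum1_diff N x.+1%:R; rewrite natrSB1 => <-.
by field; rewrite nat1r pnatr_eq0.
Qed.

Lemma hsum2_diff N x :
  x * (hsum2 N x - hsum2 N (x - 1)) = 2 * \sum_(1 <= k < N.+1) dterm x k / k%:R.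
Proof.
rewrite /hsum2 -sumrB !mulr_sumr; apply: eq_big_nat => -[//|k] _.
transitivity (x * (hterm x k.+1 - hterm (x - 1) k.+1) / k.+1%:R ^+ 2); first by ring.
by rewrite hterm_diff; field; rewrite natS_neq0.
Qed.

Lemma hclosed_nat N m : (m < N)%N -> hclosed N m.+1%:R = 0.
Proof.
move=> lt_mN; rewrite /hclosed -natr1 (_ : 1 - _ = - m%:R); last by ring.
by rewrite poch_opp_nat // !mul0r.
Qed.

Lemma hclosed_succ N x :
  hclosed N (x + 1) * (N%:R - x) * (x + 1) = hclosed N x * (- x) * (x + 1 + N%:R).
Proof.
have e1 : poch (- x) N * (- x + N%:R) = - x * poch (1 - x) N.
  by rewrite -pochS pochSl addrC.
have e2 : (x + 1) * poch (x + 1 + 1) N = poch (x + 1) N * (x + 1 + N%:R).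
  by rewrite -pochSl pochS.
rewrite /hclosed (_ : 1 - (x + 1) = - x); last by ring.
transitivity (poch (- x) N * (- x + N%:R) * ((x + 1) * poch (x + 1 + 1) N) / (N`!%:R) ^+ 2).
  by ring.
by rewrite e1 e2; ring.
Qed.

Lemma harm0 : harm 0 = 0.
Proof. by rewrite /harm big_geq. Qed.

Lemma harmS m : harm m.+1 = harm m + m.+1%:R^-1.
Proof. by rewrite /harm big_nat_recr. Qed.

Lemma hterm0 k : (0 < k)%N -> hterm 0%:R k = 0.
Proof. by move=> k_gt0; rewrite /hterm poch_opp_nat // !mul0r. Qed.

Lemma hsum1_nat N m : (m <= N)%N -> hsum1 N m%:R = -2 * harm m.
Proof.
elim: m => [|m IHm] le_mN.
  by rewrite harm0 mulr0 /hsum1 big_nat big1 // => k /andP[k_gt0 _]; rewrite hterm0 ?mul0r.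
have e := hsum1_diff N m.+1%:R.
rewrite hclosed_nat // natrSB1 (IHm (ltnW le_mN)) in e.
rewrite harmS; set s := hsum1 N _ in e *.
have -> : s = m.+1%:R * (s - -2 * harm m) / m.+1%:R + -2 * harm m.
  by field; rewrite natS_neq0.
by rewrite e; field; rewrite natS_neq0.
Qed.

Lemma sum_dterm_div N x : x != 0 ->
  \sum_(1 <= k < N.+1) dterm x k / k%:R = hsum1 N x - x^-1 * (hclosed N x - 1).
Proof.
move=> x_neq0; rewrite -sum1_dterm mulr_sumr /hsum1 -sumrB.
apply: eq_big_nat => k /andP[k_gt0 _]; rewrite -[hterm x k](mulKf x_neq0) -dterm_hterm.
by field; rewrite x_neq0 pnatr_eq0 -lt0n k_gt0.
Qed.

Lemma hsum2_nat N m : (m <= N)%N -> hsum2 N m%:R = -2 * harm m ^+ 2.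
Proof.
elim: m => [|m IHm] le_mN.
  by rewrite harm0 expr0n mulr0 /hsum2 big_nat big1 // => k /andP[k_gt0 _]; rewrite hterm0 ?mul0r.
have e := hsum2_diff N m.+1%:R.
rewrite sum_dterm_div ?pnatr_eq0 // hclosed_nat // hsum1_nat // harmS in e.
rewrite natrSB1 (IHm (ltnW le_mN)) in e.
rewrite harmS; set s := hsum2 N _ in e *.
have -> : s = m.+1%:R * (s - -2 * harm m ^+ 2) / m.+1%:R + -2 * harm m ^+ 2.
  by field; rewrite natS_neq0.
by rewrite e; field; rewrite natS_neq0.
Qed.

Lemma pdvd_horner_comb p j (P : {poly rat}) (l : seq (rat * rat)) :
  P \is a polyOver (pint p) ->
  (forall i, \sum_(q <- l) q.1 * q.2 ^+ i \in pdvd p j) ->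
  \sum_(q <- l) q.1 * P.[q.2] \in pdvd p j.
Proof.
move=> /polyOverP Pint lj.
under eq_bigr do rewrite horner_coef mulr_sumr.
rewrite exchange_big rpred_sum // => i _.
under eq_bigr do rewrite mulrCA.
by rewrite -mulr_sumr pdvdMl.
Qed.

Definition hpoly k : {poly rat} := \prod_(j < k) (((j%:R + 1/2) ^+ 2)%:P - 'X).

Lemma hterm_hpoly x k : hterm x k = (hpoly k).[(x + 1/2) ^+ 2] / (k`!%:R) ^+ 2.
Proof.
rewrite /hterm /hpoly /poch horner_prod -big_split /=; congr (_ / _).
by apply: eq_bigr => j _; rewrite !hornerE; field.
Qed.

Lemma hsum1E N x :
  hsum1 N x = \sum_(1 <= k < N.+1) (k`!%:R ^+ 2 * k%:R)^-1 * (hpoly k).[(x + 1/2) ^+ 2].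
Proof. by apply: eq_bigr => k _; rewrite hterm_hpoly [in RHS]invfM; ring. Qed.

Lemma hsum2E N x :
  hsum2 N x = \sum_(1 <= k < N.+1) (k`!%:R ^+ 2 * k%:R ^+ 2)^-1 * (hpoly k).[(x + 1/2) ^+ 2].
Proof. by apply: eq_bigr => k _; rewrite hterm_hpoly [in RHS]invfM; ring. Qed.

Lemma hpoly_over p k : coprime 2 p -> hpoly k \is a polyOver (pint p).
Proof.
move=> cop2p; apply: rpred_prod => j _.
by rewrite rpredB ?polyOverX // polyOverC rpredX // rpredD ?rpred_nat // div1r pint_natV.
Qed.

Section HornerCongruences.
Variables (p : nat) (P : {poly rat}) (s : rat) (j : nat).
Hypotheses (p_gt0 : (0 < p)%N) (P_int : P \is a polyOver (pint p)) (s_dvd : s \in pdvd p j).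

Let s_int : s \in pint p. Proof. exact: pint_pdvd s_dvd. Qed.

Lemma horner_sub0_pdvd : P.[s] - P.[0] \in pdvd p j.
Proof.
have := pdvd_horner_comb (l := [:: (1, s); (-1, 0)]) P_int.
rewrite !big_cons big_nil /= mul1r mulN1r addr0; apply=> -[|i];
  rewrite !big_cons big_nil /= addr0 ?expr0 mul1r mulN1r.
- by rewrite subrr rpred0.
- by rewrite expr0n oppr0 addr0 exprS pdvdMr ?(rpredX _ s_int).
Qed.

Lemma horner_second_diff_pdvd : P.[9 * s] - 9 * P.[s] + 8 * P.[0] \in pdvd p (j + j).
Proof.
have := pdvd_horner_comb (l := [:: (1, 9 * s); (-9, s); (8, 0)]) P_int.
rewrite !big_cons big_nil /= mul1r !mulNr addr0 addrA.
have eq0_pdvd x : x = 0 -> x \in pdvd p (j + j) by move->; apply: rpred0.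
apply=> -[|[|i]]; rewrite !big_cons big_nil /= addr0; try by apply: eq0_pdvd; ring.
rewrite expr0n mulr0 addr0 mul1r exprMn mulNr -mulrBl !exprSr -!mulrA.
apply: pdvdMl; first by rewrite rpredB ?rpredM ?rpredX ?rpred_nat.
by apply: pdvdMl; [exact: rpredX | exact: pdvdM].
Qed.

End HornerCongruences.

Section BigNatPairs.
Variables (R : Type) (idx : R) (op : Monoid.com_law idx).

Lemma big_nat_pair_ends (F : nat -> R) n :
  \big[op/idx]_(0 <= i < n + n) F i = \big[op/idx]_(0 <= i < n) op (F i) (F (n + n - i.+1)%N).
Proof.
rewrite (@big_cat_nat _ _ _ n) ?leq_addr //= big_split /=; congr (op _ _).
rewrite big_nat_rev -{1}[n]add0n big_addn addnK; apply: eq_bigr => i _.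
by congr F; lia.
Qed.

Lemma big_nat_mid_pairs (F : nat -> R) n :
  \big[op/idx]_(0 <= i < n + n.+1) F i =
  op (F n) (\big[op/idx]_(0 <= i < n) op (F (n - i.+1)%N) (F (n.+1 + i)%N)).
Proof.
have lo : \big[op/idx]_(0 <= i < n) F i = \big[op/idx]_(0 <= i < n) F (n - i.+1)%N.
  by rewrite big_nat_rev add0n.
have hi : \big[op/idx]_(n.+1 <= i < n + n.+1) F i = \big[op/idx]_(0 <= i < n) F (n.+1 + i)%N.
  rewrite -{1}[n.+1]add0n big_addn (_ : (n + n.+1 - n.+1)%N = n) ?addnK //.
  by apply: eq_bigr => i _; rewrite addnC.
have lt_n : (n < n + n.+1)%N by rewrite addnS ltnS leq_addr.
rewrite (@big_cat_nat _ _ _ n) ?leq_addr //= (big_ltn lt_n).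
by rewrite lo hi big_split /= Monoid.mulmCA.
Qed.
End BigNatPairs.

Lemma pair_defect_eq (F : fieldType) (p m : F) : m != 0 -> p - m != 0 -> p + m != 0 ->
  -2 / (p - m) - 2 / (p + m) + 2 * p * (2 / (m * (p - m))) + 4 * p ^+ 2 / m ^+ 3 =
  p ^+ 4 * (4 * (m^-1 ^+ 3 * (p - m)^-1 * (p + m)^-1)).
Proof. by move=> m_neq0 pBm_neq0 pDm_neq0; field; rewrite m_neq0 pBm_neq0 pDm_neq0. Qed.

Section OddPrime.
Variables (n p : nat).
Hypotheses (pr_p : prime p) (p_eq : p = n.*2.+1).

Let p_gt0 : (0 < p)%N. Proof. exact: prime_gt0. Qed.
Let p_neq0 : p%:R != 0 :> rat. Proof. by rewrite pnatr_eq0 -lt0n. Qed.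

Lemma coprime2p : coprime 2 p.
Proof. by rewrite prime_coprime // p_eq dvdn2 /= odd_double. Qed.

Lemma coprime_lt_prime k : (0 < k < p)%N -> coprime k p.
Proof.
move=> /andP[k_gt0 lt_kp]; rewrite coprime_sym prime_coprime //.
by apply/negP => /(dvdn_leq k_gt0); rewrite leqNgt lt_kp.
Qed.

Lemma coprime_fact k : (k < p)%N -> coprime k`! p.
Proof.
elim: k => [|k IHk] lt_kp; first exact: coprime1n.
by rewrite factS coprimeMl coprime_lt_prime ?IHk ?(ltnW lt_kp).
Qed.

Lemma pint_factV k : (0 < k < p)%N -> (k`!%:R ^+ 2)^-1 \in pint p.
Proof.
move=> /andP[_ lt_kp]; rewrite -natrX; apply: pint_natV; apply: coprimeXl.
exact: coprime_fact.
Qed.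

Lemma pint_natV_lt k : (0 < k < p)%N -> k%:R^-1 \in pint p.
Proof. by move=> /coprime_lt_prime; apply: pint_natV. Qed.

Lemma pint_subV m : (0 < m < p)%N -> (p%:R - m%:R)^-1 \in pint p.
Proof.
move=> /andP[m_gt0 lt_mp]; rewrite -natrB 1?ltnW // pint_natV_lt //.
by rewrite subn_gt0 lt_mp ltn_subrL m_gt0 p_gt0.
Qed.

Lemma pint_addV m : (0 < m < p)%N -> (p%:R + m%:R)^-1 \in pint p.
Proof.
move=> /coprime_lt_prime cop_mp; rewrite -natrD pint_natV //.
by rewrite /coprime gcdnC gcdnDl gcdnC.
Qed.

Lemma hclosed_pE : hclosed n.*2 p%:R = \prod_(0 <= i < n.*2) (1 + p%:R / i.+1%:R).
Proof.
rewrite -poch_succ_fact /hclosed p_eq -natr1 opprD addrCA subrr addr0.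
rewrite poch_oppn -mul2n exprM sqrrN expr1n mul1r.
by field; rewrite fact_neq0.
Qed.

Definition pair_coef (i : nat) : rat := 2 / (i.+1%:R * (p%:R - i.+1%:R)).

Lemma hclosed_p_pairs : hclosed n.*2 p%:R = \prod_(0 <= i < n) (1 + p%:R ^+ 2 * pair_coef i).
Proof.
rewrite hclosed_pE -addnn big_nat_pair_ends.
apply: eq_big_nat => i /andP[_ lt_in].
have -> : (n + n - i.+1).+1%:R = p%:R - i.+1%:R :> rat.
  by rewrite -natrB ?p_eq; [congr (_%:R); lia | lia].
have lt_ip : i.+1%:R < p%:R :> rat by rewrite ltr_nat p_eq; lia.
change ((1 + p%:R / i.+1%:R) * (1 + p%:R / (p%:R - i.+1%:R)) = 1 + p%:R ^+ 2 * pair_coef i).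
by rewrite /pair_coef; field; rewrite natS_neq0 andbT nat1r subr_eq0 gt_eqF.
Qed.

Lemma hclosed_succ_p m :
  hclosed n.*2 (p%:R + m%:R + 1) * (m%:R + 1) * (p%:R + m%:R + 1) =
  hclosed n.*2 (p%:R + m%:R) * (p%:R + m%:R) * (2 * p%:R + m%:R).
Proof.
have := hclosed_succ n.*2 (p%:R + m%:R).
rewrite (_ : n.*2%:R = p%:R - 1); last by rewrite p_eq natrSB1.
move=> e; transitivity (- (hclosed n.*2 (p%:R + m%:R + 1) * (p%:R - 1 - (p%:R + m%:R)) *
  (p%:R + m%:R + 1))); first by ring.
by rewrite e; ring.
Qed.

Lemma hclosed_above_p m :
  hclosed n.*2 (p%:R + m.+1%:R) = hclosed n.*2 p%:R *
    (2 * p%:R ^+ 2 / (m.+1%:R * (p%:R + m.+1%:R))) * \prod_(1 <= i < m.+1) (1 + 2 * p%:R / i%:R).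
Proof.
elim: m => [|m IHm].
  have := hclosed_succ_p 0; rewrite mulr0n !addr0 add0r mulr1 big_geq // mulr1 mul1r => e.
  have p1_neq0 : p%:R + 1 != 0 :> rat by rewrite natr1 pnatr_eq0.
  by apply: (mulIf p1_neq0); rewrite e; field.
have := hclosed_succ_p m.+1; rewrite -[m.+2%:R]natr1 addrA big_nat_recr //= IHm => e.
have den_neq0 : (m.+1%:R + 1) * (p%:R + m.+1%:R + 1) != 0 :> rat.
  by rewrite -!natrD !natr1 -natrM pnatr_eq0.
apply: (mulIf den_neq0); rewrite mulrA e; field.
by rewrite !nat1r -!natrD !natr1 !pnatr_eq0 ?addnS.
Qed.

Lemma pint_pair_coef i : (i < n)%N -> pair_coef i \in pint p.
Proof.
move=> lt_in; have i_range : (0 < i.+1 < p)%N by rewrite p_eq; lia.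
by rewrite /pair_coef invfM !rpredM ?rpred_nat ?pint_natV_lt ?pint_subV.
Qed.

Lemma hclosed_p_congr :
  hclosed n.*2 p%:R - 1 - p%:R ^+ 2 * \sum_(0 <= i < n) pair_coef i \in pdvd p 4.
Proof.
rewrite hclosed_p_pairs mulr_sumr; apply: (prod1D_sub_sum_pdvd p_gt0 (j := 2)) => i.
rewrite mem_index_iota => /andP[_ lt_in]; apply: pdvdMr; first exact: pint_pair_coef.
exact: pdvd_pexp.
Qed.

Lemma hclosed_p_sub1 : hclosed n.*2 p%:R - 1 \in pdvd p 1.
Proof.
rewrite hclosed_p_pairs; apply: (pdvdW p_gt0 (j := 2)) => //.
apply: (prod1D_sub1_pdvd p_gt0) => i; rewrite mem_index_iota => /andP[_ lt_in].
by apply: pdvdMr; [exact: pint_pair_coef | exact: pdvd_pexp].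
Qed.

Lemma hclosed_above_p_congr m : (m < n)%N ->
  2 * hclosed n.*2 (p%:R + m.+1%:R) / (p%:R + m.+1%:R) - 4 * p%:R ^+ 2 / m.+1%:R ^+ 3
    \in pdvd p 3.
Proof.
move=> lt_mn; have m_range : (0 < m.+1 < p)%N by rewrite p_eq; lia.
have u_int := pint_addV m_range; have v_int := pint_natV_lt m_range.
set u := (p%:R + m.+1%:R)^-1 in u_int; set v := m.+1%:R^-1 in v_int.
pose E : rat := hclosed n.*2 p%:R; pose PI : rat := \prod_(1 <= i < m.+1) (1 + 2 * p%:R / i%:R).
have PI_congr : PI - 1 \in pdvd p 1.
  apply: (prod1D_sub1_pdvd p_gt0) => i; rewrite mem_index_iota => i_range.
  rewrite mulrAC; apply: pdvdMl; last exact: pdvd_p.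
  by rewrite rpredM ?rpred_nat ?pint_natV_lt //; lia.
have E_congr : E - 1 \in pdvd p 1 := hclosed_p_sub1.
have m1_neq0 : m.+1%:R != 0 :> rat by rewrite pnatr_eq0.
have pm_neq0 : p%:R + m.+1%:R != 0 :> rat by rewrite -natrD pnatr_eq0 addnS.
have -> : 2 * hclosed n.*2 (p%:R + m.+1%:R) / (p%:R + m.+1%:R) - 4 * p%:R ^+ 2 / m.+1%:R ^+ 3
    = (4 * v * p%:R ^+ 2) * (((E - 1) * PI + (PI - 1)) * u ^+ 2 - p%:R * (u * v * (u + v))).
  rewrite hclosed_above_p -/E -/PI /u /v; field.
  by rewrite !nat1r -natrD !pnatr_eq0 addnS.
apply: (@pdvdM p 2 1).
  by apply: pdvdMl; [rewrite rpredM ?rpred_nat | exact: (pdvd_pexp p_gt0)].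
have PI_int : PI \in pint p.
  by rewrite -[PI](subrK 1) rpredD ?rpred1 ?(pint_pdvd p_gt0 PI_congr).
apply: rpredB; last by apply: pdvdMr; [rewrite !rpredM ?rpredD | exact: pdvd_p].
apply: pdvdMr; first exact: rpredX.
by apply: rpredD; [exact: pdvdMr | exact: PI_congr].
Qed.

Lemma hsum1_shift_p :
  hsum1 n.*2 (n%:R + p%:R) - hsum1 n.*2 n%:R = 2 * (hclosed n.*2 p%:R - 1) / p%:R +
    \sum_(0 <= i < n) (-2 / (p%:R - i.+1%:R) +
                       2 * (hclosed n.*2 (p%:R + i.+1%:R) - 1) / (p%:R + i.+1%:R)).
Proof.
have p_split : p = (n + n.+1)%N by rewrite p_eq; lia.
have := telescope_sumr (fun k => hsum1 n.*2 (n + k)%:R) (leq0n p).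
rewrite addn0 -natrD => <-; rewrite [in LHS]p_split big_nat_mid_pairs.
congr (_ + _); first by rewrite addnS hsum1_succ -addnS -p_split.
apply: eq_big_nat => i /andP[_ lt_in].
have lo : (n + (n - i.+1) = n + n - i.+1)%N by lia.
have hi : (n + (n.+1 + i) = p + i)%N by lia.
rewrite [(n + (n - i.+1).+1)%N]addnS [(n + (n.+1 + i).+1)%N]addnS lo hi !hsum1_succ.
congr (_ + _).
  rewrite hclosed_nat; last by lia.
  have -> : (n + n - i.+1).+1 = (p - i.+1)%N by lia.
  by rewrite natrB ?sub0r ?mulrN1 //; lia.
by rewrite -addnS natrD.
Qed.

Lemma hsum1_shift_p_congr : hsum1 n.*2 (n%:R + p%:R) - hsum1 n.*2 n%:R \in pdvd p 3.
Proof.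
pose E : rat := hclosed n.*2 p%:R.
pose tau i : rat :=
  2 * hclosed n.*2 (p%:R + i.+1%:R) / (p%:R + i.+1%:R) - 4 * p%:R ^+ 2 / i.+1%:R ^+ 3.
pose rho i : rat := -2 / (p%:R - i.+1%:R) - 2 / (p%:R + i.+1%:R) + 2 * p%:R * pair_coef i +
  4 * p%:R ^+ 2 / i.+1%:R ^+ 3.
rewrite hsum1_shift_p.
rewrite (_ : _ + _ = 2 * (E - 1 - p%:R ^+ 2 * \sum_(0 <= i < n) pair_coef i) / p%:R +
  \sum_(0 <= i < n) (tau i + rho i)).
  apply: rpredD.
    by apply: pdvd_divp; apply: pdvdMl; [exact: rpred_nat | exact: hclosed_p_congr].
  rewrite big_nat; apply: rpred_sum => i /andP[_ lt_in]; apply: rpredD.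
    exact: hclosed_above_p_congr.
  have i_range : (0 < i.+1 < p)%N by rewrite p_eq; lia.
  apply: (pdvdW p_gt0 (j := 4)) => //.
  rewrite /rho /pair_coef pair_defect_eq; last 3 first.
  - by rewrite pnatr_eq0.
  - by rewrite subr_eq0 eqr_nat; lia.
  - by rewrite -natrD pnatr_eq0 addnS.
  apply: pdvdMr; last exact: pdvd_pexp.
  by rewrite !rpredM ?rpred_nat ?rpredX ?pint_natV_lt ?pint_subV ?pint_addV.
rewrite (_ : \sum_(0 <= i < n) (tau i + rho i) = \sum_(0 <= i < n) (-2 / (p%:R - i.+1%:R) +
    2 * (hclosed n.*2 (p%:R + i.+1%:R) - 1) / (p%:R + i.+1%:R)) +
  2 * p%:R * \sum_(0 <= i < n) pair_coef i).
  by rewrite /E; field.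
by rewrite mulr_sumr -big_split; apply: eq_bigr => i _; rewrite /tau /rho /=; ring.
Qed.

Let s := (p%:R / 2) ^+ 2 : rat.

Let s_pdvd : s \in pdvd p 2.
Proof. by rewrite /s expr_div_n pdvdMr ?pdvd_pexp // -natrX pint_natV ?coprimeXl ?coprime2p. Qed.

Let at_n : (n%:R + 1/2) ^+ 2 = s.
Proof. by rewrite /s p_eq -addnn -[(n + n).+1]addn1 !natrD; field. Qed.

Let at_np : (n%:R + p%:R + 1/2) ^+ 2 = 9 * s.
Proof. by rewrite /s p_eq -addnn -[(n + n).+1]addn1 !natrD; field. Qed.

Let at_half : (- (1/2) + 1/2) ^+ 2 = 0 :> rat.
Proof. by rewrite addNr expr0n. Qed.

Lemma hsum1_second_diff :
  hsum1 n.*2 (n%:R + p%:R) - 9 * hsum1 n.*2 n%:R + 8 * hsum1 n.*2 (- (1/2)) \in pdvd p 4.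
Proof.
rewrite !hsum1E at_n at_np at_half !mulr_sumr -sumrB -big_split /= -p_eq big_nat.
apply: rpred_sum => k k_range; set w := _^-1; set P := hpoly k.
rewrite (_ : _ - _ + _ = w * (P.[9 * s] - 9 * P.[s] + 8 * P.[0])); last by ring.
apply: pdvdMl; first by rewrite /w invfM; apply: rpredM; [exact: pint_factV | exact: pint_natV_lt].
exact: (horner_second_diff_pdvd p_gt0 (hpoly_over k coprime2p) s_pdvd).
Qed.

Lemma hsum1_half_congr : hsum1 n.*2 (- (1/2)) - hsum1 n.*2 n%:R \in pdvd p 3.
Proof.
set h := hsum1 n.*2; have -> : h (- (1/2)) - h n%:R =
    8^-1 * ((h (n%:R + p%:R) - 9 * h n%:R + 8 * h (- (1/2))) - (h (n%:R + p%:R) - h n%:R)).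
  by field.
apply: pdvdMl.
  by apply: pint_natV; rewrite -[8%N]/(2 ^ 3)%N; apply: coprimeXl; exact: coprime2p.
by apply: rpredB; [exact: (pdvdW p_gt0 _ hsum1_second_diff) | exact: hsum1_shift_p_congr].
Qed.

Lemma hsum2_half_congr : hsum2 n.*2 (- (1/2)) - hsum2 n.*2 n%:R \in pdvd p 2.
Proof.
rewrite -opprB rpredN !hsum2E at_n at_half -sumrB -p_eq big_nat.
apply: rpred_sum => k k_range; rewrite -mulrBr; apply: pdvdMl.
  rewrite invfM -[(k%:R ^+ 2)^-1]exprVn.
  by apply: rpredM; [exact: pint_factV | exact/rpredX/pint_natV_lt].
exact: (horner_sub0_pdvd p_gt0 (hpoly_over k coprime2p) s_pdvd).
Qed.

End OddPrime.

Theorem theorem4p2 (p : nat) (hp : prime p) (hp3 : (3 < p)%N) :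
  rat_congr p 3
    (\sum_(1 <= k < p) (poch (1/2) k)^+2 / (poch 1 k)^+2 * (k%:R)^-1)
    (-2 * harm p.-1./2)
  /\
  rat_congr p 2
    (\sum_(1 <= k < p) (poch (1/2) k)^+2 / (poch 1 k)^+2 * ((k%:R)^+2)^-1)
    (-2 * (harm p.-1./2)^+2).
Proof.
have p_odd : odd p by case: (even_prime hp) hp3 => [->|].
set n := p./2; have p_eq : p = n.*2.+1 by rewrite -[LHS]odd_double_half p_odd.
have -> : p.-1./2 = n by rewrite p_eq /= doubleK.
have le_n2n : (n <= n.*2)%N by rewrite -addnn leq_addr.
have sum1E : \sum_(1 <= k < p) poch (1/2) k ^+ 2 / poch 1 k ^+ 2 * k%:R^-1 = hsum1 n.*2 (- (1/2)).
  by rewrite /hsum1 -p_eq; apply: eq_bigr => k _; rewrite hterm_half.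
have sum2E : \sum_(1 <= k < p) poch (1/2) k ^+ 2 / poch 1 k ^+ 2 * (k%:R ^+ 2)^-1 =
    hsum2 n.*2 (- (1/2)).
  by rewrite /hsum2 -p_eq; apply: eq_bigr => k _; rewrite hterm_half.
rewrite sum1E sum2E -(hsum1_nat le_n2n) -(hsum2_nat le_n2n).
by split; apply: rat_congr_pdvd => //; [exact: hsum1_half_congr | exact: hsum2_half_congr].
Qed.
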